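(* The law $\mathrm{x}\simeq(\mathrm{x}\diamond(\mathrm{x}\diamond\mathrm{y}))\diamond\mathrm{y}$ does not imply the law $\mathrm{x}\simeq(\mathrm{x}\diamond\mathrm{y})\diamond((\mathrm{x}\diamond\mathrm{y})\diamond\mathrm{y})$. Specifically, let $M=\langle a,b,c\mid a^2=b^2=c^2=1\rangle$ (the group of reduced words in $a,b,c$ with no two equal adjacent letters), define $f\colon M\to M$ by $f(1)=1$, $f(a)=b$, $f(b)=c$, $f(c)=a$, and $f(sw)=s$ for each letter $s\in\{a,b,c\}$ and each nonempty reduced word $w$ not starting with $s$; then the magma $(M,\diamond)$ with $x\diamond y=x\,f(x^{-1}y)$ satisfies the first law but not the second.
   Context: A magma satisfies a law if the identity holds for all assignments of variables; a law implies another if every magma satisfying the first satisfies the second. *)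

From HB Require Import structures.
From mathcomp Require Import all_boot.
Set Implicit Arguments. Unset Strict Implicit. Unset Printing Implicit Defensive.

Definition law1 (T : Type) (op : T -> T -> T) : Prop :=
  forall x y : T, x = op (op x (op x y)) y.
Definition law2 (T : Type) (op : T -> T -> T) : Prop :=
  forall x y : T, x = op (op x y) (op (op x y) y).

Definition letter := 'I_3.
Definition la : letter := @Ordinal 3 0 isT.
Definition lb : letter := @Ordinal 3 1 isT.
Definition lc : letter := @Ordinal 3 2 isT.
Definition lnext (s : letter) : letter :=
  if s == la then lb else if s == lb then lc else la.

Definition reduced (w : seq letter) : bool := sorted (fun x y => x != y) w.

(** Free reduction in <a,b,c | a^2=b^2=c^2=1>. *)
Fixpoint reduce (w : seq letter) : seq letter :=
  match w with
  | [::] => [::]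
  | s :: w' =>
      match reduce w' with
      | t :: r => if s == t then r else s :: t :: r
      | [::] => [:: s]
      end
  end.

Lemma reduce_reduced (w : seq letter) : reduced (reduce w).
Proof.
elim: w => [|s w IH] //=.
case E: (reduce w) IH => [|t r] //= H.
case: ifP => st.
- by case: r H {E} => //= u r /andP [].
- by rewrite /reduced /= st.
Qed.

Definition M : Type := {w : seq letter | reduced w}.
Definition mkM (w : seq letter) : M := exist _ (reduce w) (reduce_reduced w).

Definition Mmul (x y : M) : M := mkM (proj1_sig x ++ proj1_sig y).
Definition Minv (x : M) : M := mkM (rev (proj1_sig x)).

Definition fw (w : seq letter) : seq letter :=
  match w with
  | [::] => [::]
  | [:: s] => [:: lnext s]
  | s :: _ :: _ => [:: s]
  end.
Definition f (x : M) : M := mkM (fw (proj1_sig x)).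

Definition diamond (x y : M) : M := Mmul x (f (Mmul (Minv x) y)).

(* The operation x ◇ y = x f(x⁻¹y) commutes with left translations of the
   group M, so the first law reduces to its instance at x = 1, namely
   f(g⁻¹u) = g⁻¹ with g = f(f(u)).  Write s+1 for the cyclic successor of a
   letter s; letters are involutions.  For u = 1 everything is 1; for u = s,
   g⁻¹u = (s+2)s is a word of length two beginning with s+2 = g⁻¹; for u = sw
   with w ≠ 1, g = s+1 and g⁻¹u = (s+1)sw is again reduced and long. *)

From HB Require Import structures.
From mathcomp Require Import all_boot.

Set Implicit Arguments.
Unset Strict Implicit.
Unset Printing Implicit Defensive.

Local Open Scope group_scope.

Section TranslationInvariantLaw1.

Variables (G : groupType) (phi : G -> G).

Lemma law1_translationP :
  law1 (fun x y : G => x * phi (x^-1 * y)) <->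
  forall u, phi ((phi (phi u))^-1 * u) = (phi (phi u))^-1.
Proof.
split=> [law u | phi_key x y].
- by have := law 1 u; rewrite !invg1 !mul1g => /esym /mulg1_eq.
- by rewrite mulKg invgM -(mulgA _ x^-1) phi_key mulgK.
Qed.

End TranslationInvariantLaw1.

Section FreeReduction.

Implicit Types (s : letter) (u v w : seq letter).

Definition reduce_cons_step s w : seq letter :=
  if w is t :: w' then (if s == t then w' else s :: w) else [:: s].

Lemma reduce_cons s w : reduce (s :: w) = reduce_cons_step s (reduce w).
Proof. by rewrite /=; case: (reduce w). Qed.

Lemma reduced_cons s w : reduced (s :: w) -> reduced w.
Proof. by case: w => //= t w /andP []. Qed.

Lemma reduce_id w : reduced w -> reduce w = w.
Proof.
elim: w => [|s w IHw] //= sw_red.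
rewrite (IHw (reduced_cons sw_red)).
by case: w sw_red {IHw} => [|t w] //= /andP [/negbTE ->].
Qed.

Lemma reduce_idem w : reduce (reduce w) = reduce w.
Proof. exact/reduce_id/reduce_reduced. Qed.

Lemma reduce_cons_stepK s w :
  reduced w -> reduce_cons_step s (reduce_cons_step s w) = w.
Proof.
case: w => [|t w] /=; first by rewrite eqxx.
have [<-|_] := eqVneq s t; last by rewrite /= eqxx.
by case: w => [|u w] //= /andP [/negbTE ->].
Qed.

Lemma reduce_catr u v : reduce (u ++ reduce v) = reduce (u ++ v).
Proof. by elim: u => [|s u /= ->]; first exact: reduce_idem. Qed.

Lemma reduce_cons_step_cat s w v :
  reduce (reduce_cons_step s w ++ v) = reduce (s :: w ++ v).
Proof.
case: w => [|t w] //; rewrite {1}/reduce_cons_step.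
have [<-|//] := eqVneq s t.
by rewrite cat_cons !reduce_cons reduce_cons_stepK ?reduce_reduced.
Qed.

Lemma reduce_catl u v : reduce (reduce u ++ v) = reduce (u ++ v).
Proof.
elim: u => [|s u IHu] //.
by rewrite reduce_cons reduce_cons_step_cat cat_cons !reduce_cons IHu.
Qed.

Lemma reduce_revK u : reduce (rev u ++ u) = [::].
Proof.
elim: u => [|s u IHu] //.
rewrite rev_cons cat_rcons -reduce_catr !reduce_cons.
by rewrite reduce_cons_stepK ?reduce_reduced // reduce_catr.
Qed.

Lemma reduced_rev w : reduced (rev w) = reduced w.
Proof. by rewrite /reduced rev_sorted; apply: eq_sorted => // x y; rewrite eq_sym. Qed.

End FreeReduction.

Definition M1 : M := exist _ [::] isT.

Lemma val_Mmul (x y : M) : val (Mmul x y) = reduce (val x ++ val y).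
Proof. by []. Qed.

Lemma val_Minv (x : M) : val (Minv x) = rev (val x).
Proof. by rewrite /= reduce_id // reduced_rev; case: x. Qed.

Lemma MmulA : associative Mmul.
Proof.
by move=> x y z; apply: val_inj; rewrite !val_Mmul reduce_catl reduce_catr catA.
Qed.

Lemma Mmul1 : left_id M1 Mmul.
Proof. by case=> w w_red; apply: val_inj; rewrite /= reduce_id. Qed.

Lemma Mmulr1 : right_id M1 Mmul.
Proof. by case=> w w_red; apply: val_inj; rewrite /= cats0 reduce_id. Qed.

Lemma MmulV : left_inverse M1 Minv Mmul.
Proof. by move=> x; apply: val_inj; rewrite val_Mmul val_Minv reduce_revK. Qed.

Lemma MmulVr : right_inverse M1 Minv Mmul.
Proof.
by move=> x; apply: val_inj; rewrite val_Mmul val_Minv -{1}(revK (val x)) reduce_revK.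
Qed.

HB.instance Definition _ := Choice.on M.
HB.instance Definition _ :=
  isGroup.Build M MmulA Mmul1 Mmulr1 MmulV MmulVr.

Lemma val_f (x : M) : val (f x) = fw (val x).
Proof. by rewrite /= reduce_id //; case: (val x) => [|s [|t w]]. Qed.

Lemma lnext_neq s : lnext s != s.
Proof. by case: s => [[|[|[|n]]] ?]. Qed.

Lemma fw_key u : reduced u -> fw (reduce (rev (fw (fw u)) ++ u)) = rev (fw (fw u)).
Proof.
case: u => [|s [|t w]] u_red //; first by case: s {u_red} => [[|[|[|n]]] ?].
change (fw (reduce [:: lnext s, s, t & w]) = [:: lnext s]).
by rewrite reduce_id // /reduced /= lnext_neq.
Qed.

Lemma f_key (u : M) : f ((f (f u))^-1 * u) = (f (f u))^-1.
Proof.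
apply: val_inj; rewrite val_f val_Mmul !val_Minv !val_f.
by apply: fw_key; case: u.
Qed.

Lemma law1_diamond : law1 diamond.
Proof. exact/(law1_translationP f)/f_key. Qed.

(* With x = 1 and y = a:  1 ◇ a = b,  b ◇ a = 1  and  b ◇ 1 = bc ≠ 1. *)
Lemma not_law2_diamond : ~ law2 diamond.
Proof. by move=> /(_ M1 (exist _ [:: la] isT)) /(congr1 val); vm_compute. Qed.

Theorem mainTheorem15 :
  law1 diamond /\ ~ law2 diamond /\
  ~ (forall (T : Type) (op : T -> T -> T), law1 op -> law2 op).
Proof.
split; first exact: law1_diamond.
split; first exact: not_law2_diamond.
by move=> law1_law2; apply/not_law2_diamond/law1_law2/law1_diamond.
Qed.
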